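(* Let $a_1,a_2,b_1,b_2,\gamma>0$ and define $F_1(r)=\frac1{a_1}r^{a_1}$, $F_2(r)=\frac1{a_2}r^{a_2}$ for $r\ge0$, and $h(\mathbf r)=\dfrac{r_1^{b_1}r_2^{b_2}}{(1+r_1+r_2)^\gamma}$ for $\mathbf r\in[0,\infty)^2$. Then $F_1,F_2,h$ satisfy all the conditions (F), (h), ($\theta$) listed in the context if and only if, for $j=1,2$, \[a_j\ge2,\qquad b_j\ge2a_j-1,\qquad b_1+b_2\le\gamma+\min\{a_1,a_2\}.\]
   Context: Conditions. (F): for $j=1,2$, $F_j:[0,\infty)\to[0,\infty)$ is $C^2$ with $F_j''(r)>0$ for $r>0$, $F_j(0)=F_j'(0)=0$, $\liminf_{r\to\infty}F_j''(r)>0$, $\limsup_{r\to\infty}F_j'(r)/F_j(r)<\infty$; there are $m_j,M_j>0$, $\beta_j\ge0$, $r_0>0$ with $m_jr^{\beta_j}\le F_j''(r)\le M_jr^{\beta_j}$ for $0\le r\le r_0$; and $F_j(r)-rF_j'(r)+r^2F_j''(r)\ge0$ for all $r\ge0$. (h): $h:[0,\infty)^2\to\mathbb R$ is $C^2$ with $h(r_1,0)=h(0,r_2)=0$ and $\partial_{r_j}h(r_1,0)=\partial_{r_j}h(0,r_2)=0$ for $j=1,2$ and all $r_1,r_2\ge0$. ($\theta$): with $\theta_j(\mathbf u):=\partial_{r_j}h((F_1')^{-1}(u_1),(F_2')^{-1}(u_2))$ and $\theta_{j,i}:=\partial_{u_i}\theta_j$ (i.e. $\theta_{j,i}(\mathbf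 u)=\partial_{r_i}\partial_{r_j}h(\mathbf r)/F_i''(r_i)$, $r_k=(F_k')^{-1}(u_k)$), each $\theta_{j,i}$ is locally Lipschitz on $[0,\infty)^2$ and there are constants $\kappa_{j,i}>0$ with $|\partial_{r_i}\partial_{r_j}h(\mathbf r)|\le\kappa_{j,i}F_i''(r_i)\min\{1,F_1'(r_1),F_2'(r_2),\sqrt{r_i/r_j}\}$ for all $\mathbf r\in[0,\infty)^2$ and $i,j\in\{1,2\}$. *)

From Stdlib Require Import Reals Lra.
Open Scope R_scope.

(* Power r^a for r >= 0 with the conventions 0^a = 0 (a <> 0), 0^0 = 1. *)
Definition rpow (r a : R) : R :=
  if Rlt_dec 0 r then Rpower r a
  else if Req_EM_T a 0 then 1 else 0.

Definition deriv_nn (f : R -> R) (x l : R) : Prop :=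
  forall eps, 0 < eps -> exists d, 0 < d /\
    forall t, 0 <= t -> t <> x -> Rabs (t - x) < d ->
      Rabs ((f t - f x) / (t - x) - l) < eps.

Definition cont_nn (f : R -> R) (x : R) : Prop :=
  forall eps, 0 < eps -> exists d, 0 < d /\
    forall t, 0 <= t -> Rabs (t - x) < d -> Rabs (f t - f x) < eps.

Definition C2_nn (f f1 f2 : R -> R) : Prop :=
  forall x, 0 <= x -> deriv_nn f x (f1 x) /\ deriv_nn f1 x (f2 x) /\ cont_nn f2 x.

Definition condF_with (F F1 F2 : R -> R) : Prop :=
  (forall r, 0 <= r -> 0 <= F r) /\
  C2_nn F F1 F2 /\
  (forall r, 0 < r -> 0 < F2 r) /\
  F 0 = 0 /\ F1 0 = 0 /\
  (* liminf_{r -> oo} F''(r) > 0 *)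
  (exists c, 0 < c /\ exists R0, forall r, R0 <= r -> c <= F2 r) /\
  (* limsup_{r -> oo} F'(r)/F(r) < oo *)
  (exists C R0, forall r, R0 <= r -> F1 r / F r <= C) /\
  (exists m M beta r0, 0 < m /\ 0 < M /\ 0 <= beta /\ 0 < r0 /\
     forall r, 0 <= r <= r0 -> m * rpow r beta <= F2 r /\ F2 r <= M * rpow r beta) /\
  (forall r, 0 <= r -> F r - r * F1 r + r ^ 2 * F2 r >= 0).

Definition dist2 (x1 y1 x2 y2 : R) : R := sqrt ((x1 - x2) ^ 2 + (y1 - y2) ^ 2).

Definition partial1 (f : R -> R -> R) (x y l : R) : Prop := deriv_nn (fun t => f t y) x l.
Definition partial2 (f : R -> R -> R) (x y l : R) : Prop := deriv_nn (fun t => f x t) y l.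

Definition cont_Q (g : R -> R -> R) (x y : R) : Prop :=
  forall eps, 0 < eps -> exists d, 0 < d /\
    forall x' y', 0 <= x' -> 0 <= y' -> dist2 x' y' x y < d ->
      Rabs (g x' y' - g x y) < eps.

(* h is C^2 on [0,oo)^2; hj = d_{r_j} h, hji = d_{r_i} d_{r_j} h *)
Definition C2_Q (h h1 h2 h11 h12 h21 h22 : R -> R -> R) : Prop :=
  forall x y, 0 <= x -> 0 <= y ->
    partial1 h x y (h1 x y) /\ partial2 h x y (h2 x y) /\
    partial1 h1 x y (h11 x y) /\ partial2 h1 x y (h12 x y) /\
    partial1 h2 x y (h21 x y) /\ partial2 h2 x y (h22 x y) /\
    cont_Q h x y /\ cont_Q h1 x y /\ cont_Q h2 x y /\
    cont_Q h11 x y /\ cont_Q h12 x y /\ cont_Q h21 x y /\ cont_Q h22 x y.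

Definition loc_lip_Q (g : R -> R -> R) : Prop :=
  forall x y, 0 <= x -> 0 <= y -> exists d L, 0 < d /\
    forall x1 y1 x2 y2, 0 <= x1 -> 0 <= y1 -> 0 <= x2 -> 0 <= y2 ->
      dist2 x1 y1 x y < d -> dist2 x2 y2 x y < d ->
      Rabs (g x1 y1 - g x2 y2) <= L * dist2 x1 y1 x2 y2.

Definition inv_nn (G Fd : R -> R) : Prop :=
  forall u, 0 <= u -> 0 <= G u /\ Fd (G u) = u /\
  (forall r, 0 <= r -> Fd r = u -> r = G u).

Definition min4 (a b c d : R) : R := Rmin a (Rmin b (Rmin c d)).

(* All conditions (F), (h), (theta) for F1, F2, h.  The derivatives and the
   inverses (F_k')^{-1} are unique on the relevant domains, so quantifying
   them existentially is faithful. *)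
Definition all_conditions (F1 F2 : R -> R) (h : R -> R -> R) : Prop :=
  exists (F1d F1dd F2d F2dd : R -> R) (h1 h2 h11 h12 h21 h22 : R -> R -> R),
    condF_with F1 F1d F1dd /\ condF_with F2 F2d F2dd /\
    (* (h) *)
    C2_Q h h1 h2 h11 h12 h21 h22 /\
    (forall r1, 0 <= r1 -> h r1 0 = 0 /\ h1 r1 0 = 0 /\ h2 r1 0 = 0) /\
    (forall r2, 0 <= r2 -> h 0 r2 = 0 /\ h1 0 r2 = 0 /\ h2 0 r2 = 0) /\
    (* (theta) *)
    (exists G1 G2 : R -> R, inv_nn G1 F1d /\ inv_nn G2 F2d /\
      let th1 := fun u1 u2 => h1 (G1 u1) (G2 u2) in
      let th2 := fun u1 u2 => h2 (G1 u1) (G2 u2) in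
      exists th11 th12 th21 th22 : R -> R -> R,
        (forall u1 u2, 0 <= u1 -> 0 <= u2 ->
           partial1 th1 u1 u2 (th11 u1 u2) /\ partial2 th1 u1 u2 (th12 u1 u2) /\
           partial1 th2 u1 u2 (th21 u1 u2) /\ partial2 th2 u1 u2 (th22 u1 u2)) /\
        loc_lip_Q th11 /\ loc_lip_Q th12 /\ loc_lip_Q th21 /\ loc_lip_Q th22) /\
    (exists k11 k12 k21 k22 : R, 0 < k11 /\ 0 < k12 /\ 0 < k21 /\ 0 < k22 /\
      forall x y, 0 <= x -> 0 <= y ->
        Rabs (h11 x y) <= k11 * F1dd x * min4 1 (F1d x) (F2d y) (sqrt (x / x)) /\
        Rabs (h12 x y) <= k12 * F2dd y * min4 1 (F1d x) (F2d y) (sqrt (y / x)) /\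
        Rabs (h21 x y) <= k21 * F1dd x * min4 1 (F1d x) (F2d y) (sqrt (x / y)) /\
        Rabs (h22 x y) <= k22 * F2dd y * min4 1 (F1d x) (F2d y) (sqrt (y / y))).

Definition Fpow (a : R) (r : R) : R := rpow r a / a.

Definition hmodel (b1 b2 gamma : R) (x y : R) : R :=
  rpow x b1 * rpow y b2 / Rpower (1 + x + y) gamma.

(** Necessity: on [0, +oo) condition (F) pins down the derivatives of [F_j = r^a_j / a_j] as
    [r^(a_j - 1)] and [(a_j - 1) r^(a_j - 2)], and [liminf F_j'' > 0] forces [a_j >= 2]. Since [h]
    and [d_1 h] vanish on the axis [r1 = 0], integrating the bound
    [|d_1^2 h| <= k (a_1 - 1) r1^(a_1 - 2) min(1, r1^(a_1 - 1))] twice in [r1] gives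
    [h(x, 1) = O(x^(2 a_1 - 1))] as [x -> 0] and [h(x, x) = O(x^a_1)] as [x -> +oo], whereas
    [h(x, 1)] is of order [x^b_1] and [h(x, x)] of order [x^(b_1 + b_2 - gamma)]; symmetrically
    in the second variable.

    Sufficiency: [h], its partial derivatives and, after the substitution [r_j = u_j^(1/(a_j - 1))]
    that inverts [F_j'], the functions [theta_j] are finite sums of terms
    [c u1^a u2^b (1 + u1^e1 + u2^e2)^(-r)]. This class is closed under partial derivatives; its
    members are continuous, locally Lipschitz when [a, b >= 1], and bounded on [(0, +oo)^2] by a
    multiple of [x^p y^q] when every term has [p <= a], [q <= b] and [(a - p) + (b - q) <= r].
    The inequalities relating [a_j], [b_j] and [gamma] are exactly what these exponent checks
    require. *)

From Stdlib Require Import Reals Lra.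
From Coquelicot Require Import Coquelicot.
From Stdlib Require Import List.
Import ListNotations.
Open Scope R_scope.

Lemma Rpower_gt_0 x y : 0 < Rpower x y.
Proof. apply exp_pos. Qed.

Lemma Rpower_1_l y : Rpower 1 y = 1.
Proof. unfold Rpower. rewrite ln_1, Rmult_0_r. apply exp_0. Qed.

Lemma Rpower_exp y z : Rpower (exp y) z = exp (z * y).
Proof. unfold Rpower. rewrite ln_exp. reflexivity. Qed.

Lemma Rpower_exponent_gap x p q C : 0 < x ->
  Rpower x p <= C * Rpower x q -> Rpower x (p - q) <= C.
Proof.
intros Hx H. pose proof (Rpower_gt_0 x q).
replace p with (p - q + q) in H by ring. rewrite Rpower_plus in H.
apply Rmult_le_reg_r in H; assumption.
Qed.

Lemma exponent_le_of_bound_at_0 p q C :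
  (forall x, 0 < x <= 1 -> Rpower x p <= C * Rpower x q) -> q <= p.
Proof.
intro HC. destruct (Rle_dec q p) as [|Hqp]; [assumption|exfalso].
pose proof (Rabs_pos C). pose proof (Rle_abs C).
set (K := (Rabs C + 1) / (q - p)).
assert (HK : 0 < K) by (apply Rdiv_lt_0_compat; lra).
assert (Hx : 0 < exp (- K) <= 1).
{ split; [apply exp_pos|]. rewrite <- exp_0. left. apply exp_increasing. lra. }
pose proof (Rpower_exponent_gap _ _ _ _ (proj1 Hx) (HC _ Hx)) as Hgap.
rewrite Rpower_exp in Hgap.
replace ((p - q) * - K) with (Rabs C + 1) in Hgap by (unfold K; field; lra).
pose proof (exp_ineq1_le (Rabs C + 1)). lra.
Qed.

Lemma exponent_le_of_bound_at_infty p q C R0 :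
  (forall x, R0 <= x -> Rpower x p <= C * Rpower x q) -> p <= q.
Proof.
intro HC. destruct (Rle_dec p q) as [|Hpq]; [assumption|exfalso].
pose proof (Rabs_pos C). pose proof (Rle_abs C).
set (K := (Rabs C + 1) / (p - q)).
assert (HK : 0 < K) by (apply Rdiv_lt_0_compat; lra).
pose proof (Rmax_l R0 (exp K)). pose proof (Rmax_r R0 (exp K)). pose proof (exp_pos K).
set (x := Rmax R0 (exp K)) in *.
pose proof (Rpower_exponent_gap x _ _ _ ltac:(lra) (HC x ltac:(lra))) as Hgap.
assert (Hmono : Rpower (exp K) (p - q) <= Rpower x (p - q)) by (apply Rle_Rpower_l; lra).
rewrite Rpower_exp in Hmono.
replace ((p - q) * K) with (Rabs C + 1) in Hmono by (unfold K; field; lra).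
pose proof (exp_ineq1_le (Rabs C + 1)). lra.
Qed.

Lemma sqrt_div_Rpower x y : 0 < x -> 0 < y ->
  sqrt (y / x) = Rpower x (- / 2) * Rpower y (/ 2).
Proof.
intros Hx Hy. rewrite <- Rpower_sqrt by (apply Rdiv_lt_0_compat; assumption).
unfold Rpower. rewrite <- exp_plus, ln_div by assumption. f_equal. ring.
Qed.

Lemma rpow_Rpower r a : 0 < r -> rpow r a = Rpower r a.
Proof. intro Hr. unfold rpow. destruct (Rlt_dec 0 r); [reflexivity|lra]. Qed.

Lemma rpow_0_l a : a <> 0 -> rpow 0 a = 0.
Proof.
intro Ha. unfold rpow. destruct (Rlt_dec 0 0); [lra|].
destruct (Req_EM_T a 0); [contradiction|reflexivity].
Qed.

Lemma rpow_0_r r : 0 <= r -> rpow r 0 = 1.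
Proof.
intro Hr. unfold rpow. destruct (Rlt_dec 0 r); [apply Rpower_O; lra|].
destruct (Req_EM_T 0 0); [reflexivity|lra].
Qed.

Lemma rpow_ge_0 r a : 0 <= rpow r a.
Proof.
unfold rpow. destruct (Rlt_dec 0 r); [left; apply Rpower_gt_0|].
destruct (Req_EM_T a 0); lra.
Qed.

Lemma rpow_gt_0 r a : 0 < r -> 0 < rpow r a.
Proof. intro Hr. rewrite rpow_Rpower by exact Hr. apply Rpower_gt_0. Qed.

Lemma rpow_1_r r : 0 <= r -> rpow r 1 = r.
Proof.
intros [Hr|<-]; [rewrite rpow_Rpower by exact Hr; apply Rpower_1, Hr|apply rpow_0_l; lra].
Qed.

Lemma rpow_pred r a : 0 <= r -> a <> 0 -> rpow r a = r * rpow r (a - 1).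
Proof.
intros [Hr|<-] Ha.
- rewrite !rpow_Rpower by exact Hr. rewrite <- (Rpower_1 r) at 2 by exact Hr.
  rewrite <- Rpower_plus. f_equal. ring.
- rewrite rpow_0_l by exact Ha. ring.
Qed.

Lemma rpow_rpow r a b : 0 <= r -> a <> 0 -> a * b <> 0 -> rpow (rpow r a) b = rpow r (a * b).
Proof.
intros [Hr|<-] Ha Hab.
- rewrite (rpow_Rpower r) by exact Hr. rewrite !rpow_Rpower by (apply Rpower_gt_0 || exact Hr).
  apply Rpower_mult.
- assert (b <> 0) by (intros ->; apply Hab; ring).
  rewrite (rpow_0_l a), !rpow_0_l by assumption. reflexivity.
Qed.

Lemma rpow_le_compat_l t x p : 0 <= t <= x -> 0 <= p -> rpow t p <= rpow x p.
Proof.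
intros Ht [Hp|<-]; [|rewrite !rpow_0_r; lra].
destruct (Req_dec t 0) as [->|Ht0]; [rewrite rpow_0_l by lra; apply rpow_ge_0|].
rewrite !rpow_Rpower by lra. apply Rle_Rpower_l; lra.
Qed.

Lemma rpow_plus r a b : 0 <= r -> 0 <= a -> 0 <= b -> rpow r (a + b) = rpow r a * rpow r b.
Proof.
intros [Hr|<-] Ha Hb; [rewrite !rpow_Rpower by exact Hr; apply Rpower_plus|].
destruct (Req_dec a 0) as [->|Ha0]; [rewrite Rplus_0_l, rpow_0_r; lra|].
rewrite !(rpow_0_l a), rpow_0_l by lra. ring.
Qed.

Lemma rpow_ge_1 r a : 1 <= r -> 0 <= a -> 1 <= rpow r a.
Proof.
intros Hr Ha. rewrite rpow_Rpower by lra. rewrite <- (Rpower_O r) by lra. apply Rle_Rpower; lra.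
Qed.

Lemma le_mult_min4_intro z K A B C D :
  z <= K * A -> z <= K * B -> z <= K * C -> z <= K * D -> z <= K * min4 A B C D.
Proof. intros. unfold min4, Rmin. repeat destruct Rle_dec; assumption. Qed.

Lemma le_mult_min4_elim z K A B C D : 0 <= K -> z <= K * min4 A B C D ->
  z <= K * A /\ z <= K * B /\ z <= K * C /\ z <= K * D.
Proof.
intros HK Hz. unfold min4, Rmin in Hz.
repeat destruct Rle_dec; repeat split;
  (eapply Rle_trans; [exact Hz|]); apply Rmult_le_compat_l; lra.
Qed.

Lemma min4_ge_0 A B C D : 0 <= A -> 0 <= B -> 0 <= C -> 0 <= D -> 0 <= min4 A B C D.
Proof. intros. unfold min4, Rmin. repeat destruct Rle_dec; assumption. Qed.

(** * One-sided calculus on [0, +oo) *)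

Notation at_nn x := (within (fun t => 0 <= t) (locally x)).
Notation at_nn_punct x := (within (fun t => 0 <= t /\ t <> x) (locally x)).
Notation at_quadrant x y :=
  (within (fun p : R * R => 0 <= fst p /\ 0 <= snd p) (locally (x, y))).

Lemma cont_nn_filterlim f x : cont_nn f x <-> filterlim f (at_nn x) (locally (f x)).
Proof.
split.
- intros Hf P [eps HP]. destruct (Hf eps (cond_pos eps)) as [d [Hd Hfd]].
  exists (mkposreal d Hd). intros t Ht Ht0. apply HP, Hfd; auto.
- intros Hf eps Heps.
  destruct (Hf (ball (f x) eps) (locally_ball _ (mkposreal eps Heps))) as [d Hd].
  exists d; split; [apply cond_pos|]. intros t Ht0 Ht. exact (Hd t Ht Ht0).
Qed.

Lemma deriv_nn_filterlim f x l :
  deriv_nn f x l <-> filterlim (fun t => (f t - f x) / (t - x)) (at_nn_punct x) (locally l).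
Proof.
split.
- intros Hf P [eps HP]. destruct (Hf eps (cond_pos eps)) as [d [Hd Hfd]].
  exists (mkposreal d Hd). intros t Ht [Ht0 Htx]. apply HP, Hfd; auto.
- intros Hf eps Heps.
  destruct (Hf (ball l eps) (locally_ball _ (mkposreal eps Heps))) as [d Hd].
  exists d; split; [apply cond_pos|]. intros t Ht0 Htx Ht. exact (Hd t Ht (conj Ht0 Htx)).
Qed.

Lemma dist2_ge_l x1 y1 x2 y2 : Rabs (x1 - x2) <= dist2 x1 y1 x2 y2.
Proof.
unfold dist2. rewrite <- sqrt_Rsqr_abs. apply sqrt_le_1_alt. unfold Rsqr.
pose proof (pow2_ge_0 (y1 - y2)). nra.
Qed.

Lemma dist2_ge_r x1 y1 x2 y2 : Rabs (y1 - y2) <= dist2 x1 y1 x2 y2.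
Proof.
unfold dist2. rewrite <- sqrt_Rsqr_abs. apply sqrt_le_1_alt. unfold Rsqr.
pose proof (pow2_ge_0 (x1 - x2)). nra.
Qed.

Lemma cont_Q_of_filterlim g x y :
  filterlim (fun p => g (fst p) (snd p)) (at_quadrant x y) (locally (g x y)) -> cont_Q g x y.
Proof.
intros Hg eps Heps.
destruct (Hg (ball (g x y) eps) (locally_ball _ (mkposreal eps Heps))) as [d Hd].
exists d; split; [apply cond_pos|]. intros a b Ha Hb Hab.
apply (Hd (a, b)); [split|split; auto].
- eapply Rle_lt_trans; [apply dist2_ge_l|exact Hab].
- eapply Rle_lt_trans; [apply dist2_ge_r|exact Hab].
Qed.

Lemma cont_Q_ext f g x y : 0 <= x -> 0 <= y -> (forall a b, 0 <= a -> 0 <= b -> f a b = g a b) ->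
  cont_Q f x y -> cont_Q g x y.
Proof.
intros Hx Hy Efg Hf eps Heps. destruct (Hf eps Heps) as [d [Hd Hfd]].
exists d; split; [exact Hd|]. intros a b Ha Hb Hab. rewrite <- !Efg by assumption. auto.
Qed.

Lemma filterlim_quadrant_fst x y : filterlim fst (at_quadrant x y) (at_nn x).
Proof. intros P [d HP]. exists d. intros [a b] [Ha _] [Ha0 _]. exact (HP a Ha Ha0). Qed.

Lemma filterlim_quadrant_snd x y : filterlim snd (at_quadrant x y) (at_nn y).
Proof. intros P [d HP]. exists d. intros [a b] [_ Hb] [_ Hb0]. exact (HP b Hb Hb0). Qed.

Section RealLimits.

Context {T : Type} {F : (T -> Prop) -> Prop} {FF : Filter F}.

Lemma filterlim_Rplus (f g : T -> R) a b :
  filterlim f F (locally a) -> filterlim g F (locally b) ->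
  filterlim (fun t => f t + g t) F (locally (a + b)).
Proof. intros Hf Hg. eapply filterlim_comp_2; [exact Hf|exact Hg|apply (filterlim_plus a b)]. Qed.

Lemma filterlim_Rmult (f g : T -> R) a b :
  filterlim f F (locally a) -> filterlim g F (locally b) ->
  filterlim (fun t => f t * g t) F (locally (a * b)).
Proof. intros Hf Hg. eapply filterlim_comp_2; [exact Hf|exact Hg|apply (filterlim_mult a b)]. Qed.

Lemma filterlim_Rpower (f : T -> R) a p : 0 < a ->
  filterlim f F (locally a) -> filterlim (fun t => Rpower (f t) p) F (locally (Rpower a p)).
Proof.
intros Ha Hf. apply (filterlim_comp _ _ _ f (fun s => Rpower s p) _ _ _ Hf).
apply (continuity_pt_filterlim (fun s => Rpower s p)), derivable_continuous_pt.
exists (p * Rpower a (p - 1)). apply derivable_pt_lim_power, Ha.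
Qed.

End RealLimits.

Lemma filterlim_rpow x p : 0 <= x -> 0 <= p ->
  filterlim (fun t => rpow t p) (at_nn x) (locally (rpow x p)).
Proof.
intros [Hx|<-] [Hp|<-].
2, 4: rewrite rpow_0_r by lra; apply (filterlim_within_ext _ (fun _ => 1));
      [intros t Ht; symmetry; apply rpow_0_r, Ht|apply filterlim_const].
- assert (Hloc : at_nn x (fun t => Rpower t p = rpow t p)).
  { exists (mkposreal x Hx). intros t Ht _. change (Rabs (t - x) < x) in Ht. apply Rabs_def2 in Ht.
    symmetry; apply rpow_Rpower; lra. }
  eapply filterlim_ext_loc; [exact Hloc|]. rewrite rpow_Rpower by exact Hx.
  apply (filterlim_Rpower (fun t => t)); [exact Hx|].
  apply (filterlim_filter_le_1 _ (filter_le_within _)), filterlim_id.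
- rewrite rpow_0_l by lra. intros P [eps HP].
  exists (mkposreal _ (Rpower_gt_0 eps (/ p))). intros t Ht Ht0. apply HP.
  change (Rabs (rpow t p - 0) < eps). rewrite Rminus_0_r, Rabs_pos_eq by apply rpow_ge_0.
  destruct Ht0 as [Ht0|<-]; [|rewrite rpow_0_l by lra; apply cond_pos].
  rewrite rpow_Rpower by exact Ht0.
  rewrite <- (Rpower_1 eps) by apply cond_pos. replace 1 with (/ p * p) by (field; lra).
  rewrite <- Rpower_mult. apply Rlt_Rpower_l; [exact Hp|split; [exact Ht0|]].
  change (Rabs (t - 0) < Rpower eps (/ p)) in Ht. rewrite Rminus_0_r, Rabs_pos_eq in Ht; lra.
Qed.

Lemma at_nn_punct_proper x : 0 <= x -> ProperFilter' (at_nn_punct x).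
Proof.
intro Hx. constructor; [|apply within_filter, locally_filter].
intros [d Hd]. apply (Hd (x + d / 2)); [|pose proof (cond_pos d); split; lra].
change (Rabs (x + d / 2 - x) < d). rewrite Rabs_pos_eq; pose proof (cond_pos d); lra.
Qed.

Lemma deriv_nn_unique f x l1 l2 : 0 <= x -> deriv_nn f x l1 -> deriv_nn f x l2 -> l1 = l2.
Proof.
intros Hx Hl1 Hl2. apply deriv_nn_filterlim in Hl1, Hl2.
exact (filterlim_locally_unique (FF := at_nn_punct_proper x Hx) _ l1 l2 Hl1 Hl2).
Qed.

Lemma deriv_nn_ext f g x l : 0 <= x -> (forall t, 0 <= t -> f t = g t) ->
  deriv_nn f x l -> deriv_nn g x l.
Proof.
intros Hx Efg Hf eps Heps. destruct (Hf eps Heps) as [d [Hd Hfd]].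
exists d; split; [exact Hd|]. intros t Ht Htx Htd. rewrite <- !Efg by assumption. auto.
Qed.

Lemma deriv_nn_eq_value f x l l' : deriv_nn f x l -> l = l' -> deriv_nn f x l'.
Proof. intros Hf <-. exact Hf. Qed.

Lemma deriv_nn_const c x : deriv_nn (fun _ => c) x 0.
Proof.
intros eps Heps. exists 1. split; [lra|]. intros t _ Htx _.
replace ((c - c) / (t - x) - 0) with 0 by (field; lra). rewrite Rabs_R0. exact Heps.
Qed.

Lemma deriv_nn_plus f g x lf lg : deriv_nn f x lf -> deriv_nn g x lg ->
  deriv_nn (fun t => f t + g t) x (lf + lg).
Proof.
rewrite !deriv_nn_filterlim. intros Hf Hg.
apply (filterlim_within_ext _ (fun t => (f t - f x) / (t - x) + (g t - g x) / (t - x))).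
- intros t [_ Htx]. field. lra.
- apply filterlim_Rplus; assumption.
Qed.

Lemma deriv_nn_scal c f x l : deriv_nn f x l -> deriv_nn (fun t => c * f t) x (c * l).
Proof.
rewrite !deriv_nn_filterlim. intro Hf.
apply (filterlim_within_ext _ (fun t => c * ((f t - f x) / (t - x)))).
- intros t [_ Htx]. field. lra.
- apply filterlim_Rmult; [apply filterlim_const|exact Hf].
Qed.

Lemma deriv_nn_of_derivable_pt_lim f g x l : 0 < x -> (forall t, 0 < t -> f t = g t) ->
  derivable_pt_lim g x l -> deriv_nn f x l.
Proof.
intros Hx Efg Hg eps Heps. destruct (Hg eps Heps) as [d Hd].
exists (Rmin d x). split; [apply Rmin_pos; [apply cond_pos|exact Hx]|].
intros t Ht Htx Htd. pose proof (Rmin_l d x). pose proof (Rmin_r d x).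
assert (0 < t) by (apply Rabs_def2 in Htd; lra).
rewrite !Efg by assumption.
specialize (Hd (t - x) ltac:(lra) ltac:(lra)). replace (x + (t - x)) with t in Hd by ring. exact Hd.
Qed.

Lemma derivable_pt_lim_of_deriv_nn f x l : 0 < x -> deriv_nn f x l -> derivable_pt_lim f x l.
Proof.
intros Hx Hf eps Heps. destruct (Hf eps Heps) as [d [Hd Hfd]].
exists (mkposreal _ (Rmin_pos d x Hd Hx)). simpl. intros h Hh Hhd.
pose proof (Rmin_l d x). pose proof (Rmin_r d x). apply Rabs_def2 in Hhd as Hh2.
specialize (Hfd (x + h) ltac:(lra) ltac:(lra)). replace (x + h - x) with h in Hfd by ring.
apply Hfd. lra.
Qed.

Lemma deriv_nn_at_0 f q : f 0 = 0 -> (forall t, 0 < t -> f t = t * q t) ->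
  filterlim q (at_nn 0) (locally (q 0)) -> deriv_nn f 0 (q 0).
Proof.
intros Hf0 Hfq Hq. apply deriv_nn_filterlim.
apply (filterlim_within_ext _ q).
- intros t [Ht Ht0]. rewrite Hf0, Hfq by lra. field. lra.
- intros P HP. destruct (Hq P HP) as [d Hd]. exists d. intros t Ht [Ht0 _]. auto.
Qed.

Lemma filterlim_at_nn_punct_id x : filterlim (fun t => t) (at_nn_punct x) (locally x).
Proof. apply (filterlim_filter_le_1 _ (filter_le_within _)), filterlim_id. Qed.

Lemma deriv_nn_cont f x l : deriv_nn f x l -> cont_nn f x.
Proof.
intro Hf. apply deriv_nn_filterlim in Hf. apply cont_nn_filterlim.
assert (Hpunct : filterlim f (at_nn_punct x) (locally (f x))).
{ assert (Hlin : filterlim (fun t => f x + (f t - f x) / (t - x) * (t + - x)) (at_nn_punct x)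
                  (locally (f x + l * (x + - x)))).
  { apply filterlim_Rplus; [apply filterlim_const|apply filterlim_Rmult; [exact Hf|]].
    apply filterlim_Rplus; [apply filterlim_at_nn_punct_id|apply filterlim_const]. }
  rewrite Rplus_opp_r, Rmult_0_r, Rplus_0_r in Hlin.
  refine (filterlim_within_ext _ _ _ _ Hlin). intros t [_ Htx]. field. lra. }
intros P HP. destruct (Hpunct P HP) as [d Hd]. exists d. intros t Ht Ht0.
destruct (Req_dec t x) as [->|Htx]; [exact (locally_singleton _ _ HP)|auto].
Qed.

(* [MVT_gen] needs two-sided continuity at [a] and [b], so [f] is extended by constants
   outside [[a, b]]. *)
Lemma deriv_nn_MVT f f' a b B : 0 <= a <= b ->
  (forall t, a <= t <= b -> deriv_nn f t (f' t)) -> (forall t, a <= t <= b -> Rabs (f' t) <= B) ->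
  Rabs (f b - f a) <= B * (b - a).
Proof.
intros Hab Hd HB. set (clamp t := Rmax a (Rmin b t)).
assert (Hclamp : forall t, a <= t <= b -> clamp t = t).
{ intros t Ht. unfold clamp. rewrite Rmin_right, Rmax_right; lra. }
assert (Hclamp_lip : forall s t, a <= clamp s /\ Rabs (clamp s - clamp t) <= Rabs (s - t)).
{ intros s t. pose proof (Rle_abs (s - t)) as Hst. pose proof (Rle_abs (t - s)) as Hts.
  rewrite Rabs_minus_sym in Hts. unfold clamp, Rmax, Rmin.
  repeat destruct Rle_dec; (split; [lra|apply Rabs_le; lra]). }
destruct (MVT_gen (fun t => f (clamp t)) a b f') as [c [Hc Hfc]];
  rewrite Rmin_left, Rmax_right in * by lra.
- intros t Ht. apply (is_derive_ext_loc f).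
  + exists (mkposreal _ (Rmin_pos (t - a) (b - t) ltac:(lra) ltac:(lra))). intros s Hs.
    change (Rabs (s - t) < Rmin (t - a) (b - t)) in Hs.
    pose proof (Rmin_l (t - a) (b - t)). pose proof (Rmin_r (t - a) (b - t)).
    apply Rabs_def2 in Hs. rewrite Hclamp by lra. reflexivity.
  + apply is_derive_Reals, derivable_pt_lim_of_deriv_nn; [lra|apply Hd; lra].
- intros t Ht. apply (continuity_pt_filterlim (fun t => f (clamp t))).
  rewrite (Hclamp t Ht). apply (filterlim_comp _ _ _ clamp f _ (at_nn t)).
  + intros P [d HP]. exists d. intros s Hs. apply HP; [|destruct (Hclamp_lip s t); lra].
    change (Rabs (clamp s - t) < d). rewrite <- (Hclamp t Ht) at 1.
    eapply Rle_lt_trans; [apply Hclamp_lip|exact Hs].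
  + apply cont_nn_filterlim, (deriv_nn_cont _ _ (f' t)), Hd, Ht.
- rewrite !Hclamp in Hfc by lra. rewrite Hfc, Rabs_mult, (Rabs_pos_eq (b - a)) by lra.
  apply Rmult_le_compat_r; [lra|apply HB, Hc].
Qed.

Lemma deriv_nn_lipschitz f f' M B a b : 0 <= a <= M -> 0 <= b <= M ->
  (forall t, 0 <= t <= M -> deriv_nn f t (f' t) /\ Rabs (f' t) <= B) ->
  Rabs (f b - f a) <= B * Rabs (b - a).
Proof.
intros Ha Hb Hf. destruct (Rle_dec a b).
- rewrite (Rabs_pos_eq (b - a)) by lra.
  apply (deriv_nn_MVT f f'); [lra|intros t Ht; apply Hf; lra..].
- rewrite Rabs_minus_sym, (Rabs_minus_sym b a), (Rabs_pos_eq (a - b)) by lra.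
  apply (deriv_nn_MVT f f'); [lra|intros t Ht; apply Hf; lra..].
Qed.

Lemma deriv_nn_flat_bound f f1 f2 x B : 0 <= x -> f 0 = 0 -> f1 0 = 0 ->
  (forall t, 0 <= t <= x -> deriv_nn f t (f1 t) /\ deriv_nn f1 t (f2 t) /\ Rabs (f2 t) <= B) ->
  Rabs (f x) <= B * x ^ 2.
Proof.
intros Hx Hf0 Hf10 Hf.
assert (Hf1 : forall t, 0 <= t <= x -> Rabs (f1 t) <= B * x).
{ intros t Ht. rewrite <- (Rminus_0_r (f1 t)), <- Hf10.
  apply Rle_trans with (B * (t - 0)).
  - apply (deriv_nn_MVT f1 f2); [lra|intros s Hs; apply Hf; lra..].
  - destruct (Hf 0) as (_ & _ & HB); [lra|].
    pose proof (Rabs_pos (f2 0)). apply Rmult_le_compat_l; lra. }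
rewrite <- (Rminus_0_r (f x)), <- Hf0. replace (B * x ^ 2) with (B * x * (x - 0)) by ring.
apply (deriv_nn_MVT f f1); [lra|intros t Ht; apply Hf; lra|exact Hf1].
Qed.

Lemma deriv_nn_flat_bound_rpow f f1 f2 x K p : 0 <= x -> 0 <= p -> 0 <= K -> f 0 = 0 -> f1 0 = 0 ->
  (forall t, 0 <= t <= x ->
     deriv_nn f t (f1 t) /\ deriv_nn f1 t (f2 t) /\ Rabs (f2 t) <= K * rpow t p) ->
  Rabs (f x) <= K * rpow x (p + 2).
Proof.
intros Hx Hp HK Hf0 Hf10 Hf.
rewrite rpow_plus, (rpow_pred x 2), (rpow_pred x (2 - 1)) by lra.
replace (2 - 1 - 1) with 0 by ring. rewrite rpow_0_r, <- Rmult_assoc by exact Hx.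
replace (x * (x * 1)) with (x ^ 2) by ring. apply (deriv_nn_flat_bound f f1 f2); auto.
intros t Ht. destruct (Hf t Ht) as (? & ? & Hf2). repeat split; auto.
eapply Rle_trans; [exact Hf2|]. apply Rmult_le_compat_l; [exact HK|].
apply rpow_le_compat_l; lra.
Qed.

Lemma deriv_nn_rpow_mult_Rpower A a e r x : 0 < A -> 1 <= a -> 0 < e -> 0 <= x ->
  deriv_nn (fun t => rpow t a * Rpower (A + rpow t e) (- r)) x
    (a * rpow x (a - 1) * Rpower (A + rpow x e) (- r)
     - r * e * rpow x (a + e - 1) * Rpower (A + rpow x e) (- r - 1)).
Proof.
intros HA Ha He [Hx|<-].
- assert (Hbase : 0 < A + Rpower x e) by (pose proof (Rpower_gt_0 x e); lra).
  eapply deriv_nn_of_derivable_pt_lim with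
    (g := fun t => Rpower t a * Rpower (A + Rpower t e) (- r)); [exact Hx| |].
  { intros t Ht. rewrite !rpow_Rpower by exact Ht. reflexivity. }
  rewrite !rpow_Rpower by exact Hx.
  replace (_ - _) with (a * Rpower x (a - 1) * Rpower (A + Rpower x e) (- r) +
    Rpower x a * (- r * Rpower (A + Rpower x e) (- r - 1) * (0 + e * Rpower x (e - 1)))).
  2: { replace (a + e - 1) with (a + (e - 1)) by ring. rewrite Rpower_plus. ring. }
  apply (derivable_pt_lim_mult (fun t => Rpower t a) (fun t => Rpower (A + Rpower t e) (- r))).
  { apply derivable_pt_lim_power, Hx. }
  apply (derivable_pt_lim_comp (fun t => A + Rpower t e) (fun s => Rpower s (- r))).
  + apply derivable_pt_lim_plus; [apply derivable_pt_lim_const|apply derivable_pt_lim_power, Hx].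
  + apply derivable_pt_lim_power, Hbase.
- assert (Hq0 : a * rpow 0 (a - 1) = rpow 0 (a - 1)).
  { destruct Ha as [Ha|<-]; [rewrite rpow_0_l by lra|]; ring. }
  rewrite (rpow_0_l (a + e - 1)), Hq0 by lra.
  replace (_ - _) with (rpow 0 (a - 1) * Rpower (A + rpow 0 e) (- r)) by ring.
  apply deriv_nn_at_0 with (q := fun t => rpow t (a - 1) * Rpower (A + rpow t e) (- r)).
  + cbv beta. rewrite (rpow_0_l a) by lra. ring.
  + intros t Ht. rewrite (rpow_pred t a) by lra. ring.
  + apply filterlim_Rmult; [apply filterlim_rpow; lra|].
    apply (filterlim_Rpower (fun t => A + rpow t e)).
    * pose proof (rpow_ge_0 0 e). lra.
    * apply filterlim_Rplus; [apply filterlim_const|apply filterlim_rpow; lra].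
Qed.

Lemma deriv_nn_rpow p x : 1 <= p -> 0 <= x -> deriv_nn (fun t => rpow t p) x (p * rpow x (p - 1)).
Proof.
intros Hp Hx.
assert (Hone : forall t, Rpower (1 + rpow t 1) (- 0) = 1).
{ intro t. rewrite Ropp_0. apply Rpower_O. pose proof (rpow_ge_0 t 1). lra. }
apply (deriv_nn_ext (fun t => rpow t p * Rpower (1 + rpow t 1) (- 0)));
  [exact Hx|intros t _; rewrite Hone; ring|].
eapply deriv_nn_eq_value; [apply deriv_nn_rpow_mult_Rpower; lra|rewrite Hone; ring].
Qed.

Lemma loc_lip_Q_of_partials g g1 g2 :
  (forall M, 1 <= M -> exists B, forall u v, 0 <= u <= M -> 0 <= v <= M ->
     partial1 g u v (g1 u v) /\ partial2 g u v (g2 u v) /\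
     Rabs (g1 u v) <= B /\ Rabs (g2 u v) <= B) ->
  loc_lip_Q g.
Proof.
intros Hg x y Hx Hy. set (M := x + y + 2).
destruct (Hg M ltac:(unfold M; lra)) as [B HB].
exists 1, (B + B). split; [lra|].
intros x1 y1 x2 y2 Hx1 Hy1 Hx2 Hy2 Hd1 Hd2.
assert (Hbox : forall a b, 0 <= a -> Rabs (a - b) < 1 -> 0 <= b <= x + y -> 0 <= a <= M).
{ intros a b Ha Hab Hb. apply Rabs_def2 in Hab. unfold M; lra. }
pose proof (dist2_ge_l x1 y1 x y). pose proof (dist2_ge_r x1 y1 x y).
pose proof (dist2_ge_l x2 y2 x y). pose proof (dist2_ge_r x2 y2 x y).
assert (Hx1M : 0 <= x1 <= M) by (apply (Hbox _ x); lra).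
assert (Hy1M : 0 <= y1 <= M) by (apply (Hbox _ y); lra).
assert (Hx2M : 0 <= x2 <= M) by (apply (Hbox _ x); lra).
assert (Hy2M : 0 <= y2 <= M) by (apply (Hbox _ y); lra).
assert (Hstep1 : Rabs (g x1 y1 - g x2 y1) <= B * Rabs (x1 - x2)).
{ apply (deriv_nn_lipschitz (fun t => g t y1) (fun t => g1 t y1) M); [lra..|].
  intros t Ht. destruct (HB t y1) as (? & _ & ? & _); auto. }
assert (Hstep2 : Rabs (g x2 y1 - g x2 y2) <= B * Rabs (y1 - y2)).
{ apply (deriv_nn_lipschitz (fun t => g x2 t) (fun t => g2 x2 t) M); [lra..|].
  intros t Ht. destruct (HB x2 t) as (_ & ? & _ & ?); auto. }
assert (HB0 : 0 <= B).
{ destruct (HB x1 y1) as (_ & _ & HB1 & _); [assumption..|].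
  pose proof (Rabs_pos (g1 x1 y1)). lra. }
pose proof (dist2_ge_l x1 y1 x2 y2). pose proof (dist2_ge_r x1 y1 x2 y2).
replace (g x1 y1 - g x2 y2) with ((g x1 y1 - g x2 y1) + (g x2 y1 - g x2 y2)) by ring.
eapply Rle_trans; [apply Rabs_triang|]. nra.
Qed.

(** * Sums of terms [c u1^a u2^b (1 + u1^e1 + u2^e2)^(-r)] *)

Record term := Term { coef : R; pow1 : R; pow2 : R; pow_den : R }.

Definition term_val (e1 e2 : R) (m : term) (u1 u2 : R) : R :=
  coef m * (rpow u1 (pow1 m) * rpow u2 (pow2 m) *
            Rpower (1 + rpow u1 e1 + rpow u2 e2) (- pow_den m)).

Fixpoint eval_terms (e1 e2 : R) (P : list term) (u1 u2 : R) : R :=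
  match P with
  | [] => 0
  | m :: Q => term_val e1 e2 m u1 u2 + eval_terms e1 e2 Q u1 u2
  end.

Fixpoint dterms1 (e1 : R) (P : list term) : list term :=
  match P with
  | [] => []
  | Term c a b r :: Q =>
      Term (c * a) (a - 1) b r :: Term (- (c * r * e1)) (a + e1 - 1) b (r + 1) :: dterms1 e1 Q
  end.

Fixpoint dterms2 (e2 : R) (P : list term) : list term :=
  match P with
  | [] => []
  | Term c a b r :: Q =>
      Term (c * b) a (b - 1) r :: Term (- (c * r * e2)) a (b + e2 - 1) (r + 1) :: dterms2 e2 Q
  end.

Definition exps_ge (k : R) (m : term) : Prop := k <= pow1 m /\ k <= pow2 m /\ 0 <= pow_den m.

Lemma Forall_exps_ge_weaken k k' P : k' <= k -> Forall (exps_ge k) P -> Forall (exps_ge k') P.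
Proof.
intro Hk. apply Forall_impl. intros m (Ha & Hb & Hr). unfold exps_ge. repeat split; lra.
Qed.

Lemma dterms1_exps_ge e1 k P : 0 <= e1 -> Forall (exps_ge k) P ->
  Forall (exps_ge (k - 1)) (dterms1 e1 P).
Proof.
intros He HP. induction HP as [|[c a b r] Q Hm _ IH]; simpl; [constructor|].
destruct Hm as (Ha & Hb & Hr); simpl in *.
constructor; [|constructor; [|exact IH]]; unfold exps_ge; simpl; lra.
Qed.

Lemma dterms2_exps_ge e2 k P : 0 <= e2 -> Forall (exps_ge k) P ->
  Forall (exps_ge (k - 1)) (dterms2 e2 P).
Proof.
intros He HP. induction HP as [|[c a b r] Q Hm _ IH]; simpl; [constructor|].
destruct Hm as (Ha & Hb & Hr); simpl in *.
constructor; [|constructor; [|exact IH]]; unfold exps_ge; simpl; lra.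
Qed.

Lemma eval_terms_app e1 e2 P Q u1 u2 :
  eval_terms e1 e2 (P ++ Q) u1 u2 = eval_terms e1 e2 P u1 u2 + eval_terms e1 e2 Q u1 u2.
Proof. induction P as [|m P IH]; simpl; [|rewrite IH]; ring. Qed.

Lemma term_val_partial1 e1 e2 m u1 u2 : 0 < e1 -> 1 <= pow1 m -> 0 <= u1 -> 0 <= u2 ->
  partial1 (term_val e1 e2 m) u1 u2 (eval_terms e1 e2 (dterms1 e1 [m]) u1 u2).
Proof.
destruct m as [c a b r]. unfold partial1. simpl. unfold term_val. simpl. intros He Ha Hu1 Hu2.
set (A := 1 + rpow u2 e2). assert (HA : 0 < A) by (pose proof (rpow_ge_0 u2 e2); unfold A; lra).
assert (Hbase : forall t, 1 + rpow t e1 + rpow u2 e2 = A + rpow t e1) by (intro; unfold A; ring).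
rewrite Hbase. replace (- (r + 1)) with (- r - 1) by ring.
apply (deriv_nn_ext (fun t => c * rpow u2 b * (rpow t a * Rpower (A + rpow t e1) (- r))));
  [exact Hu1|intros t _; rewrite Hbase; ring|].
eapply deriv_nn_eq_value; [apply deriv_nn_scal, deriv_nn_rpow_mult_Rpower; assumption|ring].
Qed.

Lemma term_val_partial2 e1 e2 m u1 u2 : 0 < e2 -> 1 <= pow2 m -> 0 <= u1 -> 0 <= u2 ->
  partial2 (term_val e1 e2 m) u1 u2 (eval_terms e1 e2 (dterms2 e2 [m]) u1 u2).
Proof.
destruct m as [c a b r]. unfold partial2. simpl. unfold term_val. simpl. intros He Hb Hu1 Hu2.
set (A := 1 + rpow u1 e1). assert (HA : 0 < A) by (pose proof (rpow_ge_0 u1 e1); unfold A; lra).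
replace (- (r + 1)) with (- r - 1) by ring.
apply (deriv_nn_ext (fun t => c * rpow u1 a * (rpow t b * Rpower (A + rpow t e2) (- r))));
  [exact Hu2|intros t _; ring|].
eapply deriv_nn_eq_value; [apply deriv_nn_scal, deriv_nn_rpow_mult_Rpower; assumption|ring].
Qed.

Lemma eval_terms_partial1 e1 e2 P u1 u2 : 0 < e1 -> Forall (exps_ge 1) P -> 0 <= u1 -> 0 <= u2 ->
  partial1 (eval_terms e1 e2 P) u1 u2 (eval_terms e1 e2 (dterms1 e1 P) u1 u2).
Proof.
intros He HP Hu1 Hu2.
induction HP as [|[c a b r] Q [Ha _] _ IH]; [exact (deriv_nn_const 0 _)|].
change (dterms1 e1 (Term c a b r :: Q)) with (dterms1 e1 [Term c a b r] ++ dterms1 e1 Q).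
rewrite eval_terms_app. apply deriv_nn_plus; [apply term_val_partial1|apply IH]; auto.
Qed.

Lemma eval_terms_partial2 e1 e2 P u1 u2 : 0 < e2 -> Forall (exps_ge 1) P -> 0 <= u1 -> 0 <= u2 ->
  partial2 (eval_terms e1 e2 P) u1 u2 (eval_terms e1 e2 (dterms2 e2 P) u1 u2).
Proof.
intros He HP Hu1 Hu2.
induction HP as [|[c a b r] Q (_ & Hb & _) _ IH]; [exact (deriv_nn_const 0 _)|].
change (dterms2 e2 (Term c a b r :: Q)) with (dterms2 e2 [Term c a b r] ++ dterms2 e2 Q).
rewrite eval_terms_app. apply deriv_nn_plus; [apply term_val_partial2|apply IH]; auto.
Qed.

Lemma eval_terms_cont e1 e2 P x y : 0 <= e1 -> 0 <= e2 -> Forall (exps_ge 0) P ->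
  0 <= x -> 0 <= y -> cont_Q (eval_terms e1 e2 P) x y.
Proof.
intros He1 He2 HP Hx Hy. apply cont_Q_of_filterlim.
assert (Hfst : forall p, 0 <= p ->
  filterlim (fun z => rpow (fst z) p) (at_quadrant x y) (locally (rpow x p))).
{ intros p Hp. apply (filterlim_comp _ _ _ fst (fun t => rpow t p) _ (at_nn x));
  [apply filterlim_quadrant_fst|apply filterlim_rpow; assumption]. }
assert (Hsnd : forall p, 0 <= p ->
  filterlim (fun z => rpow (snd z) p) (at_quadrant x y) (locally (rpow y p))).
{ intros p Hp. apply (filterlim_comp _ _ _ snd (fun t => rpow t p) _ (at_nn y));
  [apply filterlim_quadrant_snd|apply filterlim_rpow; assumption]. }
induction HP as [|[c a b r] Q (Ha & Hb & _) _ IH]; simpl; [apply filterlim_const|].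
apply filterlim_Rplus; [|exact IH]. unfold term_val; simpl.
apply filterlim_Rmult; [apply filterlim_const|].
apply filterlim_Rmult; [apply filterlim_Rmult; auto|].
apply (filterlim_Rpower (fun z => 1 + rpow (fst z) e1 + rpow (snd z) e2)).
- pose proof (rpow_ge_0 x e1). pose proof (rpow_ge_0 y e2). lra.
- apply filterlim_Rplus; [apply filterlim_Rplus; [apply filterlim_const|]|]; auto.
Qed.

Lemma eval_terms_0_l e1 e2 k P y : 0 < k -> Forall (exps_ge k) P -> eval_terms e1 e2 P 0 y = 0.
Proof.
intros Hk HP. induction HP as [|[c a b r] Q (Ha & _) _ IH]; simpl; [reflexivity|].
unfold term_val; simpl in *. rewrite IH, (rpow_0_l a) by lra. ring.
Qed.

Lemma eval_terms_0_r e1 e2 k P x : 0 < k -> Forall (exps_ge k) P -> eval_terms e1 e2 P x 0 = 0.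
Proof.
intros Hk HP. induction HP as [|[c a b r] Q (_ & Hb & _) _ IH]; simpl; [reflexivity|].
unfold term_val; simpl in *. rewrite IH, (rpow_0_l b) by lra. ring.
Qed.

Lemma eval_terms_bounded_on_box e1 e2 P M : Forall (exps_ge 0) P -> 1 <= M ->
  exists B, forall u1 u2, 0 <= u1 <= M -> 0 <= u2 <= M -> Rabs (eval_terms e1 e2 P u1 u2) <= B.
Proof.
intros HP HM. induction HP as [|[c a b r] Q (Ha & Hb & Hr) _ [B IH]]; simpl in *.
{ exists 0. intros. rewrite Rabs_R0. lra. }
exists (Rabs c * (rpow M a * rpow M b) + B). intros u1 u2 Hu1 Hu2.
eapply Rle_trans; [apply Rabs_triang|]. apply Rplus_le_compat; [|auto].
unfold term_val; simpl. rewrite Rabs_mult. apply Rmult_le_compat_l; [apply Rabs_pos|].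
set (S := 1 + rpow u1 e1 + rpow u2 e2).
assert (HS : 1 <= S) by (pose proof (rpow_ge_0 u1 e1); pose proof (rpow_ge_0 u2 e2); unfold S; lra).
assert (Hden : Rpower S (- r) <= 1) by (rewrite <- (Rpower_O S) by lra; apply Rle_Rpower; lra).
pose proof (rpow_le_compat_l u1 M a Hu1 Ha). pose proof (rpow_le_compat_l u2 M b Hu2 Hb).
pose proof (rpow_ge_0 u1 a). pose proof (rpow_ge_0 u2 b). pose proof (Rpower_gt_0 S (- r)).
rewrite Rabs_pos_eq by (apply Rmult_le_pos; [apply Rmult_le_pos|]; lra).
apply Rle_trans with (rpow u1 a * rpow u2 b); [|apply Rmult_le_compat; lra].
rewrite <- (Rmult_1_r (rpow u1 a * rpow u2 b)) at 2. apply Rmult_le_compat_l; nra.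
Qed.

Lemma eval_terms_loc_lip e1 e2 P : 0 < e1 -> 0 < e2 -> Forall (exps_ge 1) P ->
  loc_lip_Q (eval_terms e1 e2 P).
Proof.
intros He1 He2 HP. apply loc_lip_Q_of_partials with
  (g1 := eval_terms e1 e2 (dterms1 e1 P)) (g2 := eval_terms e1 e2 (dterms2 e2 P)).
intros M HM.
destruct (eval_terms_bounded_on_box e1 e2 (dterms1 e1 P) M) as [B1 HB1]; [|exact HM|].
{ apply (Forall_exps_ge_weaken (1 - 1)); [lra|apply dterms1_exps_ge; [lra|exact HP]]. }
destruct (eval_terms_bounded_on_box e1 e2 (dterms2 e2 P) M) as [B2 HB2]; [|exact HM|].
{ apply (Forall_exps_ge_weaken (1 - 1)); [lra|apply dterms2_exps_ge; [lra|exact HP]]. }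
exists (Rmax B1 B2). intros u1 u2 Hu1 Hu2.
pose proof (Rmax_l B1 B2). pose proof (Rmax_r B1 B2).
pose proof (HB1 u1 u2 Hu1 Hu2). pose proof (HB2 u1 u2 Hu1 Hu2).
repeat split; try lra; [apply eval_terms_partial1|apply eval_terms_partial2]; tauto.
Qed.

Definition subst_term (s1 s2 : R) (m : term) : term :=
  Term (coef m) (s1 * pow1 m) (s2 * pow2 m) (pow_den m).

Lemma eval_terms_subst s1 s2 k P u1 u2 : 0 < s1 -> 0 < s2 -> 0 < k -> Forall (exps_ge k) P ->
  0 <= u1 -> 0 <= u2 ->
  eval_terms 1 1 P (rpow u1 s1) (rpow u2 s2) = eval_terms s1 s2 (map (subst_term s1 s2) P) u1 u2.
Proof.
intros Hs1 Hs2 Hk HP Hu1 Hu2.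
induction HP as [|[c a b r] Q (Ha & Hb & _) _ IH]; simpl in *; [reflexivity|].
rewrite IH. unfold term_val; simpl.
rewrite !rpow_1_r by apply rpow_ge_0. rewrite !rpow_rpow by nra. reflexivity.
Qed.

Lemma eval_terms_subst_C11 s1 s2 P : 0 < s1 -> 0 < s2 -> Forall (exps_ge 1) P ->
  Forall (exps_ge 2) (map (subst_term s1 s2) P) ->
  let th u1 u2 := eval_terms 1 1 P (rpow u1 s1) (rpow u2 s2) in
  let S := map (subst_term s1 s2) P in
  (forall u1 u2, 0 <= u1 -> 0 <= u2 ->
     partial1 th u1 u2 (eval_terms s1 s2 (dterms1 s1 S) u1 u2) /\
     partial2 th u1 u2 (eval_terms s1 s2 (dterms2 s2 S) u1 u2)) /\
  loc_lip_Q (eval_terms s1 s2 (dterms1 s1 S)) /\ loc_lip_Q (eval_terms s1 s2 (dterms2 s2 S)).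
Proof.
intros Hs1 Hs2 HP HS th S.
assert (Eth : forall u1 u2, 0 <= u1 -> 0 <= u2 -> eval_terms s1 s2 S u1 u2 = th u1 u2)
  by (intros; symmetry; apply (eval_terms_subst s1 s2 1); auto; lra).
assert (HS1 : Forall (exps_ge 1) S) by (apply (Forall_exps_ge_weaken 2); [lra|exact HS]).
split; [intros u1 u2 Hu1 Hu2; split|split].
- apply (deriv_nn_ext (fun t => eval_terms s1 s2 S t u2)); [exact Hu1|intros; apply Eth; auto|].
  apply eval_terms_partial1; assumption.
- apply (deriv_nn_ext (fun t => eval_terms s1 s2 S u1 t)); [exact Hu2|intros; apply Eth; auto|].
  apply eval_terms_partial2; assumption.
- apply eval_terms_loc_lip; try assumption.
  apply (Forall_exps_ge_weaken (2 - 1)); [lra|apply dterms1_exps_ge; [lra|exact HS]].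
- apply eval_terms_loc_lip; try assumption.
  apply (Forall_exps_ge_weaken (2 - 1)); [lra|apply dterms2_exps_ge; [lra|exact HS]].
Qed.

Definition dominated (p q : R) (m : term) : Prop :=
  p <= pow1 m /\ q <= pow2 m /\ pow1 m - p + (pow2 m - q) <= pow_den m.

Fixpoint coef_l1 (P : list term) : R :=
  match P with
  | [] => 0
  | m :: Q => Rabs (coef m) + coef_l1 Q
  end.

Lemma coef_l1_ge_0 P : 0 <= coef_l1 P.
Proof. induction P as [|m P IH]; simpl; [lra|pose proof (Rabs_pos (coef m)); lra]. Qed.

Lemma Rpower_dominated x y a b r p q : 0 < x -> 0 < y -> p <= a -> q <= b -> a - p + (b - q) <= r ->
  Rpower x a * Rpower y b * Rpower (1 + x + y) (- r) <= Rpower x p * Rpower y q.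
Proof.
intros Hx Hy Hp Hq Hr. set (S := 1 + x + y).
replace a with (p + (a - p)) by ring. replace b with (q + (b - q)) by ring. rewrite !Rpower_plus.
assert (Hxa : Rpower x (a - p) <= Rpower S (a - p)) by (apply Rle_Rpower_l; unfold S; lra).
assert (Hyb : Rpower y (b - q) <= Rpower S (b - q)) by (apply Rle_Rpower_l; unfold S; lra).
assert (HS : Rpower S (a - p) * Rpower S (b - q) * Rpower S (- r) <= 1).
{ rewrite <- !Rpower_plus, <- (Rpower_O S) by (unfold S; lra). apply Rle_Rpower; unfold S; lra. }
pose proof (Rpower_gt_0 x p). pose proof (Rpower_gt_0 y q). pose proof (Rpower_gt_0 x (a - p)).
pose proof (Rpower_gt_0 y (b - q)). pose proof (Rpower_gt_0 S (- r)).
pose proof (Rpower_gt_0 S (a - p)). pose proof (Rpower_gt_0 S (b - q)).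
assert (Hfac : Rpower x (a - p) * Rpower y (b - q) * Rpower S (- r) <= 1).
{ eapply Rle_trans; [|exact HS]. apply Rmult_le_compat_r; [lra|]. apply Rmult_le_compat; lra. }
replace (Rpower x p * Rpower x (a - p) * (Rpower y q * Rpower y (b - q)) * Rpower S (- r))
  with (Rpower x p * Rpower y q * (Rpower x (a - p) * Rpower y (b - q) * Rpower S (- r))) by ring.
rewrite <- (Rmult_1_r (Rpower x p * Rpower y q)) at 2. apply Rmult_le_compat_l; nra.
Qed.

Lemma eval_terms_dominated P p q x y : 0 < x -> 0 < y -> Forall (dominated p q) P ->
  Rabs (eval_terms 1 1 P x y) <= coef_l1 P * (Rpower x p * Rpower y q).
Proof.
intros Hx Hy HP.
induction HP as [|[c a b r] Q (Hp & Hq & Hr) _ IH]; simpl in *; [rewrite Rabs_R0; lra|].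
eapply Rle_trans; [apply Rabs_triang|]. rewrite Rmult_plus_distr_r.
apply Rplus_le_compat; [|exact IH].
unfold term_val; simpl. rewrite Rabs_mult. apply Rmult_le_compat_l; [apply Rabs_pos|].
rewrite !rpow_1_r, !rpow_Rpower by lra.
pose proof (Rpower_gt_0 x a). pose proof (Rpower_gt_0 y b).
pose proof (Rpower_gt_0 (1 + x + y) (- r)).
rewrite Rabs_pos_eq by (apply Rmult_le_pos; [apply Rmult_le_pos|]; lra).
apply Rpower_dominated; assumption.
Qed.

Definition dominated_by (L : list term) (x y T : R) : Prop :=
  exists p q, Forall (dominated p q) L /\ T = Rpower x p * Rpower y q.

Lemma eval_terms_le_min4 L x y a w A B C D : 1 < a -> 0 < x -> 0 < y -> 0 <= w ->
  0 <= A -> 0 <= B -> 0 <= C -> 0 <= D ->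
  dominated_by L x y (w * A) -> dominated_by L x y (w * B) ->
  dominated_by L x y (w * C) -> dominated_by L x y (w * D) ->
  Rabs (eval_terms 1 1 L x y) <= (coef_l1 L + 1) / (a - 1) * ((a - 1) * w) * min4 A B C D.
Proof.
intros Ha Hx Hy Hw HA HB HC HD.
assert (Hdom : forall T, dominated_by L x y (w * T) ->
  Rabs (eval_terms 1 1 L x y) <= coef_l1 L * w * T).
{ intros T (p & q & HL & HT). rewrite Rmult_assoc, HT. apply eval_terms_dominated; assumption. }
intros HdA HdB HdC HdD.
replace ((coef_l1 L + 1) / (a - 1) * ((a - 1) * w)) with ((coef_l1 L + 1) * w) by (field; lra).
eapply Rle_trans; [apply (le_mult_min4_intro _ (coef_l1 L * w) A B C D); apply Hdom; assumption|].
pose proof (min4_ge_0 A B C D HA HB HC HD). pose proof (coef_l1_ge_0 L).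
apply Rmult_le_compat_r; [lra|]. apply Rmult_le_compat_r; lra.
Qed.

(* The bounds of condition (theta) can vanish on the axes: [sqrt (x / x)] is [0] at [x = 0]. *)
Lemma eval_terms_bound_on_quadrant L k (B : R -> R -> R) : 0 < k -> Forall (exps_ge k) L ->
  (forall x y, 0 <= x -> 0 <= y -> 0 <= B x y) ->
  (forall x y, 0 < x -> 0 < y -> Rabs (eval_terms 1 1 L x y) <= B x y) ->
  forall x y, 0 <= x -> 0 <= y -> Rabs (eval_terms 1 1 L x y) <= B x y.
Proof.
intros Hk HL HB0 HB x y [Hx|<-] [Hy|<-]; auto;
  [rewrite (eval_terms_0_r 1 1 k)|rewrite (eval_terms_0_l 1 1 k)..]; auto;
  rewrite Rabs_R0; apply HB0; lra.
Qed.

Lemma eval_terms_le_min4_on_quadrant L a (w A B C D : R -> R -> R) :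
  1 < a -> Forall (exps_ge 1) L ->
  (forall x y, 0 <= x -> 0 <= y ->
     0 <= w x y /\ 0 <= A x y /\ 0 <= B x y /\ 0 <= C x y /\ 0 <= D x y) ->
  (forall x y, 0 < x -> 0 < y ->
     dominated_by L x y (w x y * A x y) /\ dominated_by L x y (w x y * B x y) /\
     dominated_by L x y (w x y * C x y) /\ dominated_by L x y (w x y * D x y)) ->
  forall x y, 0 <= x -> 0 <= y -> Rabs (eval_terms 1 1 L x y) <=
    (coef_l1 L + 1) / (a - 1) * ((a - 1) * w x y) * min4 (A x y) (B x y) (C x y) (D x y).
Proof.
intros Ha HL Hnn Hdom. apply (eval_terms_bound_on_quadrant L 1); [lra|exact HL| |].
- intros x y Hx Hy. destruct (Hnn x y Hx Hy) as (Hw & HA & HB & HC & HD).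
  pose proof (coef_l1_ge_0 L). apply Rmult_le_pos; [|apply min4_ge_0; assumption].
  apply Rmult_le_pos; [apply Rle_mult_inv_pos|apply Rmult_le_pos]; lra.
- intros x y Hx Hy. destruct (Hnn x y ltac:(lra) ltac:(lra)) as (Hw & HA & HB & HC & HD).
  destruct (Hdom x y Hx Hy) as (HdA & HdB & HdC & HdD).
  apply eval_terms_le_min4; assumption.
Qed.

(** * The power functions [F(r) = r^a / a] *)

Definition Fpow_d (a r : R) : R := rpow r (a - 1).
Definition Fpow_dd (a r : R) : R := (a - 1) * rpow r (a - 2).

Lemma condF_Fpow a : 2 <= a -> condF_with (Fpow a) (Fpow_d a) (Fpow_dd a).
Proof.
intro Ha. unfold condF_with, Fpow, Fpow_d, Fpow_dd.
split; [|split; [|split; [|split; [|split; [|split; [|split; [|split]]]]]]].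
- intros r Hr. pose proof (rpow_ge_0 r a). apply Rle_mult_inv_pos; lra.
- intros x Hx. split; [|split].
  + replace (rpow x (a - 1)) with (/ a * (a * rpow x (a - 1))) by (field; lra).
    eapply deriv_nn_ext; [exact Hx| |apply deriv_nn_scal, deriv_nn_rpow; lra].
    intros t _. unfold Rdiv. ring.
  + replace (a - 2) with (a - 1 - 1) by ring. apply deriv_nn_rpow; lra.
  + apply cont_nn_filterlim, (filterlim_Rmult (fun _ => a - 1));
      [apply filterlim_const|apply filterlim_rpow; lra].
- intros r Hr. pose proof (rpow_gt_0 r (a - 2) Hr). nra.
- rewrite rpow_0_l by lra. unfold Rdiv. ring.
- apply rpow_0_l. lra.
- exists (a - 1). split; [lra|]. exists 1. intros r Hr.
  pose proof (rpow_ge_1 r (a - 2) Hr ltac:(lra)). nra.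
- exists a, 1. intros r Hr. rewrite (rpow_pred r a) by lra.
  pose proof (rpow_gt_0 r (a - 1) ltac:(lra)).
  replace (rpow r (a - 1) / (r * rpow r (a - 1) / a)) with (a / r) by (field; lra).
  apply Rmult_le_reg_r with r; [lra|]. unfold Rdiv. rewrite Rmult_assoc, Rinv_l by lra. nra.
- exists (a - 1), (a - 1), (a - 2), 1. repeat split; lra.
- intros r Hr. rewrite (rpow_pred r a), (rpow_pred r (a - 1)) by lra.
  replace (a - 1 - 1) with (a - 2) by ring. pose proof (rpow_ge_0 r (a - 2)).
  replace (_ - _ + _) with (r ^ 2 * rpow r (a - 2) * ((a - 1) ^ 2 / a)) by (field; lra).
  apply Rle_ge, Rmult_le_pos; [apply Rmult_le_pos; [nra|lra]|]. apply Rle_mult_inv_pos; nra.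
Qed.

Lemma inv_nn_Fpow_d a : 2 <= a -> inv_nn (fun u => rpow u (/ (a - 1))) (Fpow_d a).
Proof.
intros Ha u Hu. unfold Fpow_d.
assert (Hinv : / (a - 1) * (a - 1) = 1) by (field; lra).
split; [apply rpow_ge_0|split].
- rewrite rpow_rpow, Hinv by first [lra|rewrite Hinv; lra|apply Rinv_neq_0_compat; lra].
  apply rpow_1_r, Hu.
- intros r Hr <-. rewrite rpow_rpow, Rmult_comm, Hinv by first [lra|rewrite Rmult_comm, Hinv; lra].
  symmetry. apply rpow_1_r, Hr.
Qed.

Lemma condF_Fpow_inv a F1 F2 : 0 < a -> condF_with (Fpow a) F1 F2 ->
  2 <= a /\ (forall r, 0 <= r -> F1 r = Fpow_d a r) /\ (forall r, 0 <= r -> F2 r = Fpow_dd a r).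
Proof.
intros Ha (_ & HC2 & _ & _ & HF10 & (c & Hc & R0 & HR0) & _).
assert (E1 : forall r, 0 < r -> F1 r = Rpower r (a - 1)).
{ intros r Hr. apply (deriv_nn_unique (Fpow a) r); [lra|apply HC2; lra|].
  apply deriv_nn_of_derivable_pt_lim with (g := fun t => / a * Rpower t a); [exact Hr| |].
  - intros t Ht. unfold Fpow. rewrite rpow_Rpower by exact Ht. unfold Rdiv. ring.
  - replace (Rpower r (a - 1)) with (/ a * (a * Rpower r (a - 1))) by (field; lra).
    apply derivable_pt_lim_scal, derivable_pt_lim_power, Hr. }
assert (E2 : forall r, 0 < r -> F2 r = (a - 1) * Rpower r (a - 1 - 1)).
{ intros r Hr. apply (deriv_nn_unique F1 r); [lra|apply HC2; lra|].
  apply deriv_nn_of_derivable_pt_lim with (g := fun t => Rpower t (a - 1)); [exact Hr|exact E1|].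
  apply derivable_pt_lim_power, Hr. }
assert (Ha2 : 2 <= a).
{ apply Rplus_le_reg_r with (-2). ring_simplify.
  apply (exponent_le_of_bound_at_infty 0 (a - 2) ((a - 1) / c) (Rmax R0 1)).
  intros x Hx. pose proof (Rmax_l R0 1). pose proof (Rmax_r R0 1).
  specialize (HR0 x ltac:(lra)). rewrite E2 in HR0 by lra.
  replace (a - 1 - 1) with (a - 2) in HR0 by ring. rewrite Rpower_O by lra.
  apply Rmult_le_reg_l with c; [exact Hc|]. unfold Rdiv. field_simplify; lra. }
assert (E1' : forall r, 0 <= r -> F1 r = Fpow_d a r).
{ intros r [Hr|<-]; unfold Fpow_d; [rewrite rpow_Rpower; auto|rewrite HF10, rpow_0_l; lra]. }
split; [exact Ha2|split; [exact E1'|]].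
intros r Hr. apply (deriv_nn_unique F1 r); [exact Hr|apply HC2, Hr|].
unfold Fpow_dd. replace (a - 2) with (a - 1 - 1) by ring.
apply deriv_nn_ext with (f := fun t => rpow t (a - 1)); [exact Hr|intros; symmetry; auto|].
apply deriv_nn_rpow; lra.
Qed.

(** * Necessity *)

Lemma hmodel_lower_bound b1 b2 g x y s : 0 < g -> 0 < x <= s -> 0 < y <= s -> 1 <= s ->
  Rpower x b1 * Rpower y b2 <= Rpower (3 * s) g * Rabs (hmodel b1 b2 g x y).
Proof.
intros Hg Hx Hy Hs. unfold hmodel. rewrite !rpow_Rpower by lra.
pose proof (Rpower_gt_0 x b1). pose proof (Rpower_gt_0 y b2).
pose proof (Rpower_gt_0 (1 + x + y) g).
rewrite Rabs_pos_eq by (apply Rle_mult_inv_pos; nra).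
assert (Hden : Rpower (1 + x + y) g <= Rpower (3 * s) g) by (apply Rle_Rpower_l; lra).
apply Rle_trans with (Rpower (1 + x + y) g * (Rpower x b1 * Rpower y b2 / Rpower (1 + x + y) g)).
- right. field. lra.
- apply Rmult_le_compat_r; [apply Rle_mult_inv_pos; nra|exact Hden].
Qed.

Lemma hmodel_lower_bound_diag b1 b2 g x : 0 < g -> 1 <= x ->
  Rpower x (b1 + b2 - g) <= Rpower 3 g * Rabs (hmodel b1 b2 g x x).
Proof.
intros Hg Hx. pose proof (hmodel_lower_bound b1 b2 g x x x Hg) as Hlow.
rewrite <- Rpower_mult_distr in Hlow by lra. pose proof (Rpower_gt_0 x g).
apply Rmult_le_reg_r with (Rpower x g); [assumption|].
unfold Rminus. rewrite Rpower_plus, Rpower_Ropp, Rmult_assoc, Rinv_l, Rmult_1_r by lra.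
rewrite Rpower_plus. eapply Rle_trans; [apply Hlow; lra|right; ring].
Qed.

Section Necessity.

Variables (a1 a2 b1 b2 g k11 k22 : R) (F1d F1dd F2d F2dd : R -> R).
Variables (h1 h2 h11 h12 h21 h22 : R -> R -> R).
Hypotheses (Ha1 : 0 < a1) (Ha2 : 0 < a2) (Hg : 0 < g) (Hk11 : 0 < k11) (Hk22 : 0 < k22).
Hypotheses (HF1 : condF_with (Fpow a1) F1d F1dd) (HF2 : condF_with (Fpow a2) F2d F2dd).
Hypothesis HC2 : C2_Q (hmodel b1 b2 g) h1 h2 h11 h12 h21 h22.
Hypothesis Hzero_x_axis :
  forall r1, 0 <= r1 -> hmodel b1 b2 g r1 0 = 0 /\ h1 r1 0 = 0 /\ h2 r1 0 = 0.
Hypothesis Hzero_y_axis :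
  forall r2, 0 <= r2 -> hmodel b1 b2 g 0 r2 = 0 /\ h1 0 r2 = 0 /\ h2 0 r2 = 0.
Hypothesis Hh11 : forall x y, 0 <= x -> 0 <= y ->
  Rabs (h11 x y) <= k11 * F1dd x * min4 1 (F1d x) (F2d y) (sqrt (x / x)).
Hypothesis Hh22 : forall x y, 0 <= x -> 0 <= y ->
  Rabs (h22 x y) <= k22 * F2dd y * min4 1 (F1d x) (F2d y) (sqrt (y / y)).

Lemma Fpow_derivatives :
  (2 <= a1 /\ (forall r, 0 <= r -> F1d r = Fpow_d a1 r) /\
               (forall r, 0 <= r -> F1dd r = Fpow_dd a1 r)) /\
  (2 <= a2 /\ (forall r, 0 <= r -> F2d r = Fpow_d a2 r) /\
               (forall r, 0 <= r -> F2dd r = Fpow_dd a2 r)).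
Proof. split; apply condF_Fpow_inv; assumption. Qed.

Lemma h11_bounds x y : 0 <= x -> 0 <= y ->
  Rabs (h11 x y) <= k11 * (a1 - 1) * rpow x (a1 - 2) /\
  Rabs (h11 x y) <= k11 * (a1 - 1) * rpow x (2 * a1 - 3).
Proof.
destruct Fpow_derivatives as [(Ha1' & E1d & E1dd) (Ha2' & E2d & _)]. intros Hx Hy.
pose proof (Hh11 x y Hx Hy) as H. rewrite E1dd, E1d, E2d in H by assumption.
unfold Fpow_dd, Fpow_d in H. rewrite <- Rmult_assoc in H.
apply le_mult_min4_elim in H as (H_1 & H_F1d & _);
  [|pose proof (rpow_ge_0 x (a1 - 2)); apply Rmult_le_pos; [apply Rmult_le_pos|]; lra].
rewrite Rmult_1_r in H_1. split; [exact H_1|].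
replace (2 * a1 - 3) with (a1 - 2 + (a1 - 1)) by ring. rewrite rpow_plus, <- Rmult_assoc by lra.
exact H_F1d.
Qed.

Lemma h22_bounds x y : 0 <= x -> 0 <= y ->
  Rabs (h22 x y) <= k22 * (a2 - 1) * rpow y (a2 - 2) /\
  Rabs (h22 x y) <= k22 * (a2 - 1) * rpow y (2 * a2 - 3).
Proof.
destruct Fpow_derivatives as [(Ha1' & E1d & _) (Ha2' & E2d & E2dd)]. intros Hx Hy.
pose proof (Hh22 x y Hx Hy) as H. rewrite E2dd, E1d, E2d in H by assumption.
unfold Fpow_dd, Fpow_d in H. rewrite <- Rmult_assoc in H.
apply le_mult_min4_elim in H as (H_1 & _ & H_F2d & _);
  [|pose proof (rpow_ge_0 y (a2 - 2)); apply Rmult_le_pos; [apply Rmult_le_pos|]; lra].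
rewrite Rmult_1_r in H_1. split; [exact H_1|].
replace (2 * a2 - 3) with (a2 - 2 + (a2 - 1)) by ring. rewrite rpow_plus, <- Rmult_assoc by lra.
exact H_F2d.
Qed.

Lemma b1_ge_2a1_minus_1 : 2 * a1 - 1 <= b1.
Proof.
destruct Fpow_derivatives as [(Ha1' & _) _].
apply (exponent_le_of_bound_at_0 b1 (2 * a1 - 1) (Rpower 3 g * (k11 * (a1 - 1)))). intros x Hx.
pose proof (hmodel_lower_bound b1 b2 g x 1 1 Hg Hx ltac:(lra) ltac:(lra)) as Hlow.
rewrite Rpower_1_l, !Rmult_1_r in Hlow. eapply Rle_trans; [exact Hlow|].
rewrite Rmult_assoc. apply Rmult_le_compat_l; [left; apply Rpower_gt_0|].
replace (2 * a1 - 1) with (2 * a1 - 3 + 2) by ring. rewrite <- rpow_Rpower by lra.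
apply (deriv_nn_flat_bound_rpow (fun t => hmodel b1 b2 g t 1) (fun t => h1 t 1) (fun t => h11 t 1));
  [lra|lra|nra|apply Hzero_y_axis; lra|apply Hzero_y_axis; lra|].
intros t Ht. destruct (HC2 t 1) as (Hd1 & _ & Hd11 & _); [lra|lra|].
repeat split; [exact Hd1|exact Hd11|apply h11_bounds; lra].
Qed.

Lemma b2_ge_2a2_minus_1 : 2 * a2 - 1 <= b2.
Proof.
destruct Fpow_derivatives as [_ (Ha2' & _)].
apply (exponent_le_of_bound_at_0 b2 (2 * a2 - 1) (Rpower 3 g * (k22 * (a2 - 1)))). intros y Hy.
pose proof (hmodel_lower_bound b1 b2 g 1 y 1 Hg ltac:(lra) Hy ltac:(lra)) as Hlow.
rewrite Rpower_1_l, Rmult_1_l, Rmult_1_r in Hlow. eapply Rle_trans; [exact Hlow|].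
rewrite Rmult_assoc. apply Rmult_le_compat_l; [left; apply Rpower_gt_0|].
replace (2 * a2 - 1) with (2 * a2 - 3 + 2) by ring. rewrite <- rpow_Rpower by lra.
apply (deriv_nn_flat_bound_rpow (fun t => hmodel b1 b2 g 1 t) (fun t => h2 1 t) (fun t => h22 1 t));
  [lra|lra|nra|apply Hzero_x_axis; lra|apply Hzero_x_axis; lra|].
intros t Ht. destruct (HC2 1 t) as (_ & Hd2 & _ & _ & _ & Hd22 & _); [lra|lra|].
repeat split; [exact Hd2|exact Hd22|apply h22_bounds; lra].
Qed.

Lemma b1_plus_b2_le_g_plus_a1 : b1 + b2 <= g + a1.
Proof.
destruct Fpow_derivatives as [(Ha1' & _) _].
cut (b1 + b2 - g <= a1); [lra|].
apply (exponent_le_of_bound_at_infty _ a1 (Rpower 3 g * (k11 * (a1 - 1))) 1). intros x Hx.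
eapply Rle_trans; [apply hmodel_lower_bound_diag; lra|].
rewrite Rmult_assoc. apply Rmult_le_compat_l; [left; apply Rpower_gt_0|].
replace a1 with (a1 - 2 + 2) at 2 by ring. rewrite <- rpow_Rpower by lra.
apply (deriv_nn_flat_bound_rpow (fun t => hmodel b1 b2 g t x) (fun t => h1 t x) (fun t => h11 t x));
  [lra|lra|nra|apply Hzero_y_axis; lra|apply Hzero_y_axis; lra|].
intros t Ht. destruct (HC2 t x) as (Hd1 & _ & Hd11 & _); [lra|lra|].
repeat split; [exact Hd1|exact Hd11|apply h11_bounds; lra].
Qed.

Lemma b1_plus_b2_le_g_plus_a2 : b1 + b2 <= g + a2.
Proof.
destruct Fpow_derivatives as [_ (Ha2' & _)].
cut (b1 + b2 - g <= a2); [lra|].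
apply (exponent_le_of_bound_at_infty _ a2 (Rpower 3 g * (k22 * (a2 - 1))) 1). intros x Hx.
eapply Rle_trans; [apply hmodel_lower_bound_diag; lra|].
rewrite Rmult_assoc. apply Rmult_le_compat_l; [left; apply Rpower_gt_0|].
replace a2 with (a2 - 2 + 2) at 2 by ring. rewrite <- rpow_Rpower by lra.
apply (deriv_nn_flat_bound_rpow (fun t => hmodel b1 b2 g x t) (fun t => h2 x t) (fun t => h22 x t));
  [lra|lra|nra|apply Hzero_x_axis; lra|apply Hzero_x_axis; lra|].
intros t Ht. destruct (HC2 x t) as (_ & Hd2 & _ & _ & _ & Hd22 & _); [lra|lra|].
repeat split; [exact Hd2|exact Hd22|apply h22_bounds; lra].
Qed.

Lemma exponent_conditions : 2 <= a1 /\ 2 <= a2 /\ 2 * a1 - 1 <= b1 /\ 2 * a2 - 1 <= b2 /\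
  b1 + b2 <= g + Rmin a1 a2.
Proof.
destruct Fpow_derivatives as [(Ha1' & _) (Ha2' & _)].
repeat split; try assumption; [apply b1_ge_2a1_minus_1|apply b2_ge_2a2_minus_1|].
apply Rmin_case; [apply b1_plus_b2_le_g_plus_a1|apply b1_plus_b2_le_g_plus_a2].
Qed.

End Necessity.

Lemma exponents_of_all_conditions a1 a2 b1 b2 g : 0 < a1 -> 0 < a2 -> 0 < g ->
  all_conditions (Fpow a1) (Fpow a2) (hmodel b1 b2 g) ->
  2 <= a1 /\ 2 <= a2 /\ 2 * a1 - 1 <= b1 /\ 2 * a2 - 1 <= b2 /\ b1 + b2 <= g + Rmin a1 a2.
Proof.
intros Ha1 Ha2 Hg (F1d & F1dd & F2d & F2dd & h1 & h2 & h11 & h12 & h21 & h22 & HF1 & HF2 & HC2 &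
  Hx_axis & Hy_axis & _ & k11 & k12 & k21 & k22 & Hk11 & _ & _ & Hk22 & Hbounds).
apply (exponent_conditions a1 a2 b1 b2 g k11 k22 F1d F1dd F2d F2dd h1 h2 h11 h12 h21 h22);
  try assumption; intros x y Hx Hy; apply Hbounds; assumption.
Qed.

(** * Sufficiency *)

Ltac solve_Forall :=
  repeat (apply Forall_cons; [unfold exps_ge, dominated; simpl; repeat split; nra|]);
  apply Forall_nil.

Ltac solve_dominated p q :=
  exists p, q; split;
    [solve_Forall
    |cbv beta; rewrite ?rpow_Rpower, ?sqrt_div_Rpower by lra; unfold Rpower;
     rewrite ?Rmult_1_r, <- ?exp_plus; f_equal; field].

Section Sufficiency.

Variables a1 a2 b1 b2 g : R.
Hypotheses (Hg : 0 < g) (Ha1 : 2 <= a1) (Ha2 : 2 <= a2).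
Hypotheses (Hb1 : 2 * a1 - 1 <= b1) (Hb2 : 2 * a2 - 1 <= b2).
Hypotheses (Hsum1 : b1 + b2 <= g + a1) (Hsum2 : b1 + b2 <= g + a2).

Local Notation hterms := [Term 1 b1 b2 g].
Local Notation hterms1 := (dterms1 1 hterms).
Local Notation hterms2 := (dterms2 1 hterms).
Local Notation hterms11 := (dterms1 1 hterms1).
Local Notation hterms12 := (dterms2 1 hterms1).
Local Notation hterms21 := (dterms1 1 hterms2).
Local Notation hterms22 := (dterms2 1 hterms2).

Lemma hmodel_eval_terms x y : 0 <= x -> 0 <= y -> hmodel b1 b2 g x y = eval_terms 1 1 hterms x y.
Proof.
intros Hx Hy. unfold hmodel. simpl. unfold term_val. simpl.
rewrite !rpow_1_r, Rpower_Ropp by assumption. unfold Rdiv. ring.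
Qed.

Lemma hmodel_C2 : C2_Q (hmodel b1 b2 g) (eval_terms 1 1 hterms1) (eval_terms 1 1 hterms2)
  (eval_terms 1 1 hterms11) (eval_terms 1 1 hterms12)
  (eval_terms 1 1 hterms21) (eval_terms 1 1 hterms22).
Proof.
intros x y Hx Hy.
assert (E : forall u v, 0 <= u -> 0 <= v -> eval_terms 1 1 hterms u v = hmodel b1 b2 g u v)
  by (intros; symmetry; apply hmodel_eval_terms; assumption).
assert (HH0 : Forall (exps_ge 1) hterms) by (solve_Forall).
assert (HH1 : Forall (exps_ge 1) hterms1) by (solve_Forall).
assert (HH2 : Forall (exps_ge 1) hterms2) by (solve_Forall).
assert (Hcont : forall P, Forall (exps_ge 0) P -> cont_Q (eval_terms 1 1 P) x y)
  by (intros; apply eval_terms_cont; lra || assumption).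
repeat split.
- apply (deriv_nn_ext (fun t => eval_terms 1 1 hterms t y)); [exact Hx|intros; apply E; auto|].
  apply eval_terms_partial1; auto; lra.
- apply (deriv_nn_ext (fun t => eval_terms 1 1 hterms x t)); [exact Hy|intros; apply E; auto|].
  apply eval_terms_partial2; auto; lra.
- apply eval_terms_partial1; auto; lra.
- apply eval_terms_partial2; auto; lra.
- apply eval_terms_partial1; auto; lra.
- apply eval_terms_partial2; auto; lra.
- apply (cont_Q_ext (eval_terms 1 1 hterms)); auto. apply Hcont. solve_Forall.
- apply Hcont. solve_Forall.
- apply Hcont. solve_Forall.
- apply Hcont. solve_Forall.
- apply Hcont. solve_Forall.
- apply Hcont. solve_Forall.
- apply Hcont. solve_Forall.
Qed.

Lemma hmodel_vanish_x_axis r1 : 0 <= r1 ->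
  hmodel b1 b2 g r1 0 = 0 /\ eval_terms 1 1 hterms1 r1 0 = 0 /\ eval_terms 1 1 hterms2 r1 0 = 0.
Proof.
intro Hr1. rewrite hmodel_eval_terms by lra.
repeat split; apply (eval_terms_0_r 1 1 1); try lra; solve_Forall.
Qed.

Lemma hmodel_vanish_y_axis r2 : 0 <= r2 ->
  hmodel b1 b2 g 0 r2 = 0 /\ eval_terms 1 1 hterms1 0 r2 = 0 /\ eval_terms 1 1 hterms2 0 r2 = 0.
Proof.
intro Hr2. rewrite hmodel_eval_terms by lra.
repeat split; apply (eval_terms_0_l 1 1 1); try lra; solve_Forall.
Qed.

Lemma theta_C11 : exists G1 G2 : R -> R, inv_nn G1 (Fpow_d a1) /\ inv_nn G2 (Fpow_d a2) /\
  let th1 := fun u1 u2 => eval_terms 1 1 hterms1 (G1 u1) (G2 u2) in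
  let th2 := fun u1 u2 => eval_terms 1 1 hterms2 (G1 u1) (G2 u2) in
  exists th11 th12 th21 th22 : R -> R -> R,
    (forall u1 u2, 0 <= u1 -> 0 <= u2 ->
       partial1 th1 u1 u2 (th11 u1 u2) /\ partial2 th1 u1 u2 (th12 u1 u2) /\
       partial1 th2 u1 u2 (th21 u1 u2) /\ partial2 th2 u1 u2 (th22 u1 u2)) /\
    loc_lip_Q th11 /\ loc_lip_Q th12 /\ loc_lip_Q th21 /\ loc_lip_Q th22.
Proof.
(* The substituted exponents, such as [s1 * (b1 - 1)], are at least 2 because
   [b_j >= 2 a_j - 1]. *)
set (s1 := / (a1 - 1)). set (s2 := / (a2 - 1)).
exists (fun u => rpow u s1), (fun u => rpow u s2).
split; [apply inv_nn_Fpow_d, Ha1|split; [apply inv_nn_Fpow_d, Ha2|]]. cbv zeta.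
assert (Hs1 : 0 < s1 /\ s1 * (a1 - 1) = 1)
  by (unfold s1; split; [apply Rinv_0_lt_compat; lra|field; lra]).
assert (Hs2 : 0 < s2 /\ s2 * (a2 - 1) = 1)
  by (unfold s2; split; [apply Rinv_0_lt_compat; lra|field; lra]).
clearbody s1 s2.
destruct (eval_terms_subst_C11 s1 s2 hterms1) as (D1 & L11 & L12); try tauto;
  [solve_Forall..|].
destruct (eval_terms_subst_C11 s1 s2 hterms2) as (D2 & L21 & L22); try tauto;
  [solve_Forall..|].
eexists _, _, _, _. split; [|split; [exact L11|split; [exact L12|split; [exact L21|exact L22]]]].
intros u1 u2 Hu1 Hu2. destruct (D1 u1 u2 Hu1 Hu2), (D2 u1 u2 Hu1 Hu2). repeat split; eassumption.
Qed.

Lemma min4_args_ge_0 (w s : R -> R -> R) : (forall u v, 0 <= w u v) ->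
  forall u v, 0 <= u -> 0 <= v ->
  0 <= w u v /\ 0 <= 1 /\ 0 <= Fpow_d a1 u /\ 0 <= Fpow_d a2 v /\ 0 <= sqrt (s u v).
Proof.
intros Hw u v _ _. unfold Fpow_d. repeat split; auto; [lra|apply rpow_ge_0..|apply sqrt_pos].
Qed.

(* Each entry of [min4], times [F_i''], is a monomial [u^p v^q]; the dominance checks are where
   [b1 + b2 <= g + a_i] is used. *)
Lemma hterms11_bound x y : 0 <= x -> 0 <= y ->
  Rabs (eval_terms 1 1 hterms11 x y) <= (coef_l1 hterms11 + 1) / (a1 - 1) *
    Fpow_dd a1 x * min4 1 (Fpow_d a1 x) (Fpow_d a2 y) (sqrt (x / x)).
Proof.
apply (eval_terms_le_min4_on_quadrant hterms11 a1 (fun u _ => rpow u (a1 - 2)) (fun _ _ => 1)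
  (fun u _ => Fpow_d a1 u) (fun _ v => Fpow_d a2 v) (fun u _ => sqrt (u / u)));
  [lra|solve_Forall|apply min4_args_ge_0; intros; apply rpow_ge_0|].
intros u v Hu Hv. unfold Fpow_d. repeat split;
  [solve_dominated (a1 - 2) 0|solve_dominated (2 * a1 - 3) 0|
   solve_dominated (a1 - 2) (a2 - 1)|solve_dominated (a1 - 2) 0].
Qed.

Lemma hterms12_bound x y : 0 <= x -> 0 <= y ->
  Rabs (eval_terms 1 1 hterms12 x y) <= (coef_l1 hterms12 + 1) / (a2 - 1) *
    Fpow_dd a2 y * min4 1 (Fpow_d a1 x) (Fpow_d a2 y) (sqrt (y / x)).
Proof.
apply (eval_terms_le_min4_on_quadrant hterms12 a2 (fun _ v => rpow v (a2 - 2)) (fun _ _ => 1)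
  (fun u _ => Fpow_d a1 u) (fun _ v => Fpow_d a2 v) (fun u v => sqrt (v / u)));
  [lra|solve_Forall|apply min4_args_ge_0; intros; apply rpow_ge_0|].
intros u v Hu Hv. unfold Fpow_d. repeat split;
  [solve_dominated 0 (a2 - 2)|solve_dominated (a1 - 1) (a2 - 2)|
   solve_dominated 0 (2 * a2 - 3)|solve_dominated (- / 2) (a2 - 3 / 2)].
Qed.

Lemma hterms21_bound x y : 0 <= x -> 0 <= y ->
  Rabs (eval_terms 1 1 hterms21 x y) <= (coef_l1 hterms21 + 1) / (a1 - 1) *
    Fpow_dd a1 x * min4 1 (Fpow_d a1 x) (Fpow_d a2 y) (sqrt (x / y)).
Proof.
apply (eval_terms_le_min4_on_quadrant hterms21 a1 (fun u _ => rpow u (a1 - 2)) (fun _ _ => 1)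
  (fun u _ => Fpow_d a1 u) (fun _ v => Fpow_d a2 v) (fun u v => sqrt (u / v)));
  [lra|solve_Forall|apply min4_args_ge_0; intros; apply rpow_ge_0|].
intros u v Hu Hv. unfold Fpow_d. repeat split;
  [solve_dominated (a1 - 2) 0|solve_dominated (2 * a1 - 3) 0|
   solve_dominated (a1 - 2) (a2 - 1)|solve_dominated (a1 - 3 / 2) (- / 2)].
Qed.

Lemma hterms22_bound x y : 0 <= x -> 0 <= y ->
  Rabs (eval_terms 1 1 hterms22 x y) <= (coef_l1 hterms22 + 1) / (a2 - 1) *
    Fpow_dd a2 y * min4 1 (Fpow_d a1 x) (Fpow_d a2 y) (sqrt (y / y)).
Proof.
apply (eval_terms_le_min4_on_quadrant hterms22 a2 (fun _ v => rpow v (a2 - 2)) (fun _ _ => 1)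
  (fun u _ => Fpow_d a1 u) (fun _ v => Fpow_d a2 v) (fun _ v => sqrt (v / v)));
  [lra|solve_Forall|apply min4_args_ge_0; intros; apply rpow_ge_0|].
intros u v Hu Hv. unfold Fpow_d. repeat split;
  [solve_dominated 0 (a2 - 2)|solve_dominated (a1 - 1) (a2 - 2)|
   solve_dominated 0 (2 * a2 - 3)|solve_dominated 0 (a2 - 2)].
Qed.

Lemma hmodel_second_partial_bounds : exists k11 k12 k21 k22 : R,
  0 < k11 /\ 0 < k12 /\ 0 < k21 /\ 0 < k22 /\
  forall x y, 0 <= x -> 0 <= y ->
    Rabs (eval_terms 1 1 hterms11 x y) <=
      k11 * Fpow_dd a1 x * min4 1 (Fpow_d a1 x) (Fpow_d a2 y) (sqrt (x / x)) /\
    Rabs (eval_terms 1 1 hterms12 x y) <=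
      k12 * Fpow_dd a2 y * min4 1 (Fpow_d a1 x) (Fpow_d a2 y) (sqrt (y / x)) /\
    Rabs (eval_terms 1 1 hterms21 x y) <=
      k21 * Fpow_dd a1 x * min4 1 (Fpow_d a1 x) (Fpow_d a2 y) (sqrt (x / y)) /\
    Rabs (eval_terms 1 1 hterms22 x y) <=
      k22 * Fpow_dd a2 y * min4 1 (Fpow_d a1 x) (Fpow_d a2 y) (sqrt (y / y)).
Proof.
assert (Hk : forall L a, 2 <= a -> 0 < (coef_l1 L + 1) / (a - 1))
  by (intros; pose proof (coef_l1_ge_0 L); apply Rdiv_lt_0_compat; lra).
exists ((coef_l1 hterms11 + 1) / (a1 - 1)), ((coef_l1 hterms12 + 1) / (a2 - 1)),
  ((coef_l1 hterms21 + 1) / (a1 - 1)), ((coef_l1 hterms22 + 1) / (a2 - 1)).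
repeat (split; [apply Hk; assumption|]).
intros x y Hx Hy. repeat split;
  [apply hterms11_bound|apply hterms12_bound|apply hterms21_bound|apply hterms22_bound]; assumption.
Qed.

Lemma all_conditions_of_exponents : all_conditions (Fpow a1) (Fpow a2) (hmodel b1 b2 g).
Proof.
exists (Fpow_d a1), (Fpow_dd a1), (Fpow_d a2), (Fpow_dd a2),
  (eval_terms 1 1 hterms1), (eval_terms 1 1 hterms2), (eval_terms 1 1 hterms11),
  (eval_terms 1 1 hterms12), (eval_terms 1 1 hterms21), (eval_terms 1 1 hterms22).
split; [apply condF_Fpow, Ha1|split; [apply condF_Fpow, Ha2|]].
split; [exact hmodel_C2|split; [exact hmodel_vanish_x_axis|split; [exact hmodel_vanish_y_axis|]]].
split; [exact theta_C11|exact hmodel_second_partial_bounds].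
Qed.

End Sufficiency.

Theorem propositionA1 (a1 a2 b1 b2 gamma : R) :
  0 < a1 -> 0 < a2 -> 0 < b1 -> 0 < b2 -> 0 < gamma ->
  (all_conditions (Fpow a1) (Fpow a2) (hmodel b1 b2 gamma) <->
   (2 <= a1 /\ 2 <= a2 /\ 2 * a1 - 1 <= b1 /\ 2 * a2 - 1 <= b2 /\
    b1 + b2 <= gamma + Rmin a1 a2)).
Proof.
intros Ha1 Ha2 Hb1 Hb2 Hg. split.
- apply exponents_of_all_conditions; assumption.
- intros (Ha1' & Ha2' & Hb1' & Hb2' & Hsum).
  pose proof (Rmin_l a1 a2). pose proof (Rmin_r a1 a2).
  apply all_conditions_of_exponents; assumption || lra.
Qed.
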